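(* Let $p>2$ be an odd integer and $n\ge 1$. Then every regular expression describing the divisibility language $L^{\mathrm{div}}_{n,p}=\{ w\in \{0,1\}^n : \mathrm{bin}(w) \equiv 0 \pmod p\}$ has length at least $\mathrm{rpn}(L^{\mathrm{div}}_{n,p}) \geq \Omega\big( n^{-1} p^{\log ( n/ \log p ) -2 } \big)$.
   Context: For $w=w_1\cdots w_d\in\{0,1\}^*$, $\mathrm{bin}(w)=\sum_{i=1}^d w_i2^{d-i}$ is its value as a binary number with the most significant bit leftmost ($\mathrm{bin}(\epsilon)=0$). Regular expressions are built from $\epsilon$ and letters by union and concatenation (no $\emptyset$, no star needed for finite languages); $\mathrm{rpn}(L)$ is the minimum number of syntax-tree nodes of an expression describing $L$. Logarithms are base 2. *)

From Stdlib Require Import Reals List Arith.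
Import ListNotations.
Open Scope R_scope.

Inductive regex : Type :=
  | REps : regex
  | RSym : bool -> regex          (* false = letter 0, true = letter 1 *)
  | RUnion : regex -> regex -> regex
  | RCat : regex -> regex -> regex.

Fixpoint lang (r : regex) (w : list bool) : Prop :=
  match r with
  | REps => w = []
  | RSym b => w = [b]
  | RUnion r1 r2 => lang r1 w \/ lang r2 w
  | RCat r1 r2 => exists u v, w = u ++ v /\ lang r1 u /\ lang r2 v
  end.

(* Number of syntax-tree nodes (the length / rpn size of an expression). *)
Fixpoint rsize (r : regex) : nat :=
  match r with
  | REps => 1
  | RSym _ => 1
  | RUnion r1 r2 => S (rsize r1 + rsize r2)
  | RCat r1 r2 => S (rsize r1 + rsize r2)
  end%nat.

(* bin(w), most significant bit leftmost, bin(epsilon) = 0. *)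
Definition bin (w : list bool) : nat :=
  fold_left (fun acc (b : bool) => (2 * acc + (if b then 1 else 0))%nat) w 0%nat.

Definition Ldiv (n p : nat) (w : list bool) : Prop :=
  length w = n /\ Nat.modulo (bin w) p = 0%nat.

Definition describes (r : regex) (L : list bool -> Prop) : Prop :=
  forall w, lang r w <-> L w.

Definition log2 (x : R) : R := ln x / ln 2.

From Stdlib Require Import Reals List Arith Lia Lra ClassicalDescription.
Import ListNotations.

(* Every subexpression of an expression describing L^div_{n,p} is uniform:
   its words all have one length l and one residue modulo p (languages of
   such expressions are never empty, and 2 is invertible modulo odd p).
   For a uniform expression r and any set W of its words, induction on r
   gives |W| F(l) / 2^l <= size(r) for every F growing by at most a factor 2
   per letter and by at most a factor p/2 when the length at most doubles:
   a union splits W, and a concatenation embeds W into T1 x T2 with T_i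
   inside one residue class of words of length l_i, so |T_i| <= ceil(2^l_i / p).
   F(l) = max(l / (2 log p), 1)^(log p - 1) qualifies; applied to the
   ceil(2^n / p) multiples of p below 2^n this yields size(r) >= F(n) / p,
   which dominates n^-1 p^(log(n / log p) - 2). *)

Section Binary.
Local Open Scope nat_scope.

Lemma bin_app (u v : list bool) : bin (u ++ v) = bin u * 2 ^ length v + bin v.
Proof.
  unfold bin. set (step := fun acc (b : bool) => 2 * acc + (if b then 1 else 0)).
  rewrite fold_left_app. generalize (fold_left step u 0) as a.
  induction v as [|b v IH]; intros a; cbn [fold_left length]; [simpl; lia|].
  rewrite (IH (step a b)), (IH (step 0 b)), Nat.pow_succ_r'. unfold step. destruct b; ring.
Qed.

Lemma bin_cons (b : bool) (u : list bool) :
  bin (b :: u) = Nat.b2n b * 2 ^ length u + bin u.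
Proof. change (b :: u) with ([b] ++ u). rewrite bin_app. now destruct b. Qed.

Lemma bin_lt (w : list bool) : bin w < 2 ^ length w.
Proof.
  induction w as [|b w IH]; [cbv; lia|].
  rewrite bin_cons. simpl length. rewrite Nat.pow_succ_r'. destruct b; simpl; lia.
Qed.

Lemma bin_inj (w w' : list bool) : length w = length w' -> bin w = bin w' -> w = w'.
Proof.
  revert w'. induction w as [|b w IH]; intros [|b' w'] Hl Hb; simpl in Hl;
    try discriminate; auto.
  injection Hl as Hl. rewrite !bin_cons, <- Hl in Hb.
  pose proof (bin_lt w). pose proof (bin_lt w'). rewrite <- Hl in *.
  destruct b, b'; simpl in Hb; f_equal; try (apply IH; lia); lia.
Qed.

Fixpoint bits_of (m x : nat) : list bool :=
  match m with
  | 0 => []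
  | S m' => bits_of m' (x / 2) ++ [Nat.odd x]
  end.

Lemma length_bits_of (m x : nat) : length (bits_of m x) = m.
Proof.
  revert x. induction m as [|m IH]; intros x; simpl; auto.
  rewrite length_app, IH. simpl. lia.
Qed.

Lemma bin_bits_of (m x : nat) : bin (bits_of m x) = x mod 2 ^ m.
Proof.
  revert x. induction m as [|m IH]; intros x.
  - symmetry. apply Nat.mod_1_r.
  - simpl bits_of. rewrite bin_app, IH.
    replace (bin [Nat.odd x]) with (x mod 2)
      by (rewrite <- Nat.bit0_odd, <- Nat.bit0_mod; now destruct (Nat.testbit x 0)).
    rewrite Nat.pow_succ_r', Nat.Div0.mod_mul_r. simpl. lia.
Qed.

End Binary.

Section Residues.
Local Open Scope nat_scope.

Lemma mod_add_cancel_r (p a b x : nat) :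
  p <> 0 -> (a + x) mod p = (b + x) mod p -> a mod p = b mod p.
Proof.
  intros Hp H.
  assert (E : forall c, ((c + x) mod p + (p - x mod p)) mod p = c mod p).
  { intros c. rewrite Nat.Div0.add_mod_idemp_l.
    pose proof (Nat.div_mod_eq x p). pose proof (Nat.mod_upper_bound x p Hp).
    replace (c + x + (p - x mod p)) with (c + (x / p + 1) * p) by nia.
    apply Nat.Div0.mod_add. }
  now rewrite <- (E a), H, E.
Qed.

(* For p = 2k+1, k+1 is an inverse of 2 modulo p. *)
Lemma mod_double_cancel (p a b : nat) :
  Nat.Odd p -> (2 * a) mod p = (2 * b) mod p -> a mod p = b mod p.
Proof.
  intros [k ->] H.
  assert (E : forall c, ((2 * c) mod (2 * k + 1) * (k + 1)) mod (2 * k + 1)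
                        = c mod (2 * k + 1)).
  { intros c. rewrite Nat.Div0.mul_mod_idemp_l.
    replace (2 * c * (k + 1)) with (c + c * (2 * k + 1)) by ring.
    apply Nat.Div0.mod_add. }
  now rewrite <- (E a), H, E.
Qed.

Lemma mod_mul_pow2_cancel (p a b m : nat) :
  Nat.Odd p -> (a * 2 ^ m) mod p = (b * 2 ^ m) mod p -> a mod p = b mod p.
Proof.
  intros Hp. revert a b. induction m as [|m IH]; intros a b H.
  - now rewrite !Nat.mul_1_r in H.
  - apply mod_double_cancel; auto. apply IH.
    now rewrite Nat.pow_succ_r', !Nat.mul_assoc, !(Nat.mul_comm _ 2) in H.
Qed.

End Residues.

Section Counting.
Local Open Scope nat_scope.

Lemma NoDup_residue_class_length (p l m : nat) (T : list (list bool)) :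
  p <> 0 -> NoDup T -> (forall u, In u T -> length u = l /\ bin u mod p = m) ->
  length T <= (2 ^ l - 1) / p + 1.
Proof.
  intros Hp HT Hcls.
  rewrite <- (length_map (fun u => bin u / p)), <- (length_seq ((2 ^ l - 1) / p + 1) 0).
  apply NoDup_incl_length.
  - apply NoDup_map_NoDup_ForallPairs; auto. intros u u' Hu Hu' E.
    destruct (Hcls u Hu), (Hcls u' Hu'). apply bin_inj; [lia|].
    rewrite (Nat.div_mod_eq (bin u) p), (Nat.div_mod_eq (bin u') p). congruence.
  - intros q Hq. apply in_map_iff in Hq as [u [<- Hu]]. apply in_seq.
    destruct (Hcls u Hu) as [Hl _]. pose proof (bin_lt u) as Hlt. rewrite Hl in Hlt.
    assert (bin u / p <= (2 ^ l - 1) / p) by (apply Nat.Div0.div_le_mono; lia). lia.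
Qed.

Lemma NoDup_const_length_le_1 {A : Type} (W : list A) (w : A) :
  NoDup W -> (forall y, In y W -> y = w) -> length W <= 1.
Proof.
  intros HW Hw. apply NoDup_incl_length with (l' := [w]); auto.
  intros y Hy. rewrite (Hw y Hy). now left.
Qed.

Lemma NoDup_split_length {A : Type} (k : nat) (W T1 T2 : list (list A)) :
  NoDup W -> (forall y, In y W -> In (firstn k y) T1 /\ In (skipn k y) T2) ->
  length W <= length T1 * length T2.
Proof.
  intros HW Hsplit. rewrite <- length_prod.
  rewrite <- (length_map (fun y => (firstn k y, skipn k y)) W).
  apply NoDup_incl_length.
  - apply NoDup_map_NoDup_ForallPairs; auto. intros y y' _ _ E. injection E as E1 E2.
    now rewrite <- (firstn_skipn k y), <- (firstn_skipn k y'), E1, E2.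
  - intros z Hz. apply in_map_iff in Hz as [y [<- Hy]].
    destruct (Hsplit y Hy). now apply in_prod.
Qed.

Lemma NoDup_cover_length {A : Type} (P Q : A -> Prop) (W : list A) :
  NoDup W -> (forall y, In y W -> P y \/ Q y) ->
  exists W1 W2, NoDup W1 /\ NoDup W2 /\ (forall y, In y W1 -> P y) /\
    (forall y, In y W2 -> Q y) /\ length W = length W1 + length W2.
Proof.
  intros HW Hcover.
  set (f := fun y => if excluded_middle_informative (P y) then true else false).
  exists (filter f W), (filter (fun y => negb (f y)) W).
  repeat split; try apply NoDup_filter; auto.
  - intros y Hy. apply filter_In in Hy as [_ Hf]. unfold f in Hf.
    now destruct (excluded_middle_informative (P y)).
  - intros y Hy. apply filter_In in Hy as [Hy Hf]. unfold f in Hf.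
    destruct (excluded_middle_informative (P y)); [discriminate|].
    now destruct (Hcover y Hy).
  - symmetry. apply filter_length.
Qed.

Lemma multiples_words (n p : nat) : p <> 0 ->
  exists W, NoDup W /\ 2 ^ n <= p * length W /\ forall y, In y W -> Ldiv n p y.
Proof.
  intros Hp. set (K := (2 ^ n - 1) / p).
  assert (HK : p * K <= 2 ^ n - 1) by apply Nat.Div0.mul_div_le.
  assert (Hpow : 0 < 2 ^ n) by (apply Nat.neq_0_lt_0, Nat.pow_nonzero; lia).
  assert (Hlt : forall k, In k (seq 0 (K + 1)) -> k * p < 2 ^ n)
    by (intros k Hk; apply in_seq in Hk; nia).
  exists (map (fun k => bits_of n (k * p)) (seq 0 (K + 1))). split; [|split].
  - apply NoDup_map_NoDup_ForallPairs; [|apply seq_NoDup]. intros k k' Hk Hk' E.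
    apply (f_equal bin) in E. rewrite !bin_bits_of, !Nat.mod_small in E by auto. nia.
  - rewrite length_map, length_seq. pose proof (Nat.mod_upper_bound (2 ^ n - 1) p Hp).
    pose proof (Nat.div_mod_eq (2 ^ n - 1) p). nia.
  - intros y Hy. apply in_map_iff in Hy as [k [<- Hk]]. split; [apply length_bits_of|].
    rewrite bin_bits_of, (Nat.mod_small (k * p)) by auto. apply Nat.Div0.mod_mul.
Qed.

End Counting.

Section Uniform.
Local Open Scope nat_scope.

Definition uniform (p : nat) (r : regex) (l m : nat) : Prop :=
  forall w, lang r w -> length w = l /\ bin w mod p = m.

Lemma lang_inhabited (r : regex) : exists w, lang r w.
Proof.
  induction r as [|b|r1 [u Hu] r2 _|r1 [u Hu] r2 [v Hv]]; simpl.
  - now exists [].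
  - now exists [b].
  - now exists u; left.
  - now exists (u ++ v), u, v.
Qed.

Lemma uniform_union (p : nat) (r1 r2 : regex) (l m : nat) :
  uniform p (RUnion r1 r2) l m -> uniform p r1 l m /\ uniform p r2 l m.
Proof. intros H; split; intros w Hw; apply H; simpl; auto. Qed.

Lemma uniform_cat (p : nat) (r1 r2 : regex) (l m : nat) : Nat.Odd p ->
  uniform p (RCat r1 r2) l m ->
  exists l1 l2 m1 m2, l = l1 + l2 /\ uniform p r1 l1 m1 /\ uniform p r2 l2 m2.
Proof.
  intros Hodd H. assert (Hp : p <> 0) by (destruct Hodd; lia).
  assert (Hcat : forall u w, lang r1 u -> lang r2 w ->
    length u + length w = l /\ (bin u * 2 ^ length w + bin w) mod p = m).
  { intros u w Hu Hw. rewrite <- length_app, <- bin_app. apply H. now exists u, w. }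
  destruct (lang_inhabited r1) as [u0 Hu0], (lang_inhabited r2) as [w0 Hw0].
  exists (length u0), (length w0), (bin u0 mod p), (bin w0 mod p). split; [|split].
  - symmetry. apply (Hcat u0 w0 Hu0 Hw0).
  - intros u Hu. destruct (Hcat u w0 Hu Hw0), (Hcat u0 w0 Hu0 Hw0). split; [lia|].
    apply (mod_mul_pow2_cancel p _ _ (length w0) Hodd), (mod_add_cancel_r p _ _ (bin w0) Hp).
    congruence.
  - intros w Hw. destruct (Hcat u0 w Hu0 Hw) as [Hl Hm], (Hcat u0 w0 Hu0 Hw0).
    split; [lia|]. replace (length w) with (length w0) in Hm by lia.
    apply (mod_add_cancel_r p _ _ (bin u0 * 2 ^ length w0) Hp).
    rewrite !(Nat.add_comm _ (bin u0 * _)). congruence.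
Qed.

Lemma NoDup_cat_split (r1 r2 : regex) (l1 : nat) (W : list (list bool)) :
  (forall u, lang r1 u -> length u = l1) ->
  NoDup W -> (forall y, In y W -> lang (RCat r1 r2) y) ->
  exists T1 T2, NoDup T1 /\ NoDup T2 /\ (forall u, In u T1 -> lang r1 u) /\
    (forall w, In w T2 -> lang r2 w) /\ length W <= length T1 * length T2.
Proof.
  intros Hlen HW Hcat.
  assert (Hsplit : forall y, In y W -> lang r1 (firstn l1 y) /\ lang r2 (skipn l1 y)).
  { intros y Hy. destruct (Hcat y Hy) as [u [w [-> [Hu Hw]]]].
    rewrite <- (Hlen u Hu), firstn_app, skipn_app, Nat.sub_diag, firstn_all, skipn_all.
    now rewrite app_nil_r. }
  set (dec := list_eq_dec Bool.bool_dec).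
  exists (nodup dec (map (firstn l1) W)), (nodup dec (map (skipn l1) W)).
  repeat split; try apply NoDup_nodup.
  - intros u Hu. apply nodup_In, in_map_iff in Hu as [y [<- Hy]]. now apply Hsplit.
  - intros w Hw. apply nodup_In, in_map_iff in Hw as [y [<- Hy]]. now apply Hsplit.
  - apply (NoDup_split_length l1); auto. intros y Hy. now split; apply nodup_In, in_map.
Qed.

End Uniform.

Section WeightedCount.

Variable p : nat.
Hypothesis p_odd : Nat.Odd p.

Variable F : nat -> R.
Hypothesis F_nonneg : forall l, 0 <= F l.
Hypothesis F_0 : F 0%nat <= 1.
Hypothesis F_succ : forall l, F (S l) <= 2 * F l.
Hypothesis F_add : forall l1 l2, (l2 <= l1)%nat -> F (l1 + l2)%nat <= INR p / 2 * F l1.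

Definition weight (l : nat) : R := F l / 2 ^ l.

Lemma weight_nonneg (l : nat) : 0 <= weight l.
Proof. apply Rmult_le_pos; [auto | left; apply Rinv_0_lt_compat, pow_lt; lra]. Qed.

Lemma weight_antitone (l m : nat) : (l <= m)%nat -> weight m <= weight l.
Proof.
  induction 1 as [|m _ IH]; [lra|]. apply Rle_trans with (2 := IH).
  unfold weight. rewrite <- tech_pow_Rmult. pose proof (pow_lt 2 m ltac:(lra)).
  replace (F (S m) / (2 * 2 ^ m)) with (F (S m) / 2 / 2 ^ m) by (field; lra).
  apply Rmult_le_compat_r; [left; apply Rinv_0_lt_compat; lra|].
  specialize (F_succ m). lra.
Qed.

Lemma weight_le_1 (l : nat) : weight l <= 1.
Proof.
  apply Rle_trans with (weight 0); [apply weight_antitone; lia|].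
  unfold weight. simpl. lra.
Qed.

Lemma weight_cat_le (l1 l2 t : nat) :
  (t <= (2 ^ l2 - 1) / p + 1)%nat -> (l2 <= l1)%nat -> weight (l1 + l2) * INR t <= weight l1.
Proof.
  intros Ht Hl. assert (Hp : p <> 0%nat) by (destruct p_odd; lia).
  pose proof (weight_nonneg (l1 + l2)).
  destruct (le_lt_dec (2 ^ l2) p) as [Hsmall|Hbig].
  - rewrite Nat.div_small in Ht by lia. apply le_INR in Ht. simpl in Ht.
    pose proof (weight_antitone l1 (l1 + l2) ltac:(lia)). nra.
  - assert (Htp : (t * p <= 2 * 2 ^ l2)%nat).
    { pose proof (Nat.Div0.mul_div_le (2 ^ l2 - 1) p).
      pose proof (Nat.mul_le_mono_r _ _ p Ht). lia. }
    apply le_INR in Htp. rewrite !mult_INR, pow_INR in Htp.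
    replace (INR 2) with 2 in Htp by (simpl; lra).
    assert (HF : F (l1 + l2) * INR t <= F l1 * 2 ^ l2).
    { specialize (F_add l1 l2 Hl). pose proof (F_nonneg l1). pose proof (pos_INR t).
      assert (0 <= (INR p / 2 * F l1 - F (l1 + l2)%nat) * INR t) by (apply Rmult_le_pos; lra).
      assert (0 <= F l1 * (2 * 2 ^ l2 - INR t * INR p)) by (apply Rmult_le_pos; lra).
      nra. }
    pose proof (pow_lt 2 l1 ltac:(lra)). pose proof (pow_lt 2 l2 ltac:(lra)).
    unfold weight. rewrite pow_add.
    replace (F (l1 + l2)%nat / (2 ^ l1 * 2 ^ l2) * INR t)
      with (F (l1 + l2)%nat * INR t / (2 ^ l1 * 2 ^ l2)) by (field; lra).
    apply Rle_trans with (F l1 * 2 ^ l2 / (2 ^ l1 * 2 ^ l2)); [|right; field; lra].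
    apply Rmult_le_compat_r; [left; apply Rinv_0_lt_compat; nra | exact HF].
Qed.

Lemma weight_cat (l1 l2 t1 t2 : nat) :
  (t1 <= (2 ^ l1 - 1) / p + 1)%nat -> (t2 <= (2 ^ l2 - 1) / p + 1)%nat ->
  INR t1 * INR t2 * weight (l1 + l2) <= INR t1 * weight l1 + INR t2 * weight l2.
Proof.
  intros H1 H2. pose proof (pos_INR t1). pose proof (pos_INR t2).
  pose proof (weight_nonneg l1). pose proof (weight_nonneg l2).
  destruct (le_lt_dec l2 l1) as [Hl|Hl].
  - pose proof (weight_cat_le l1 l2 t2 H2 Hl). nra.
  - pose proof (weight_cat_le l2 l1 t1 H1 ltac:(lia)). rewrite Nat.add_comm. nra.
Qed.

Theorem uniform_rsize_lower_bound (r : regex) (l m : nat) (W : list (list bool)) :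
  uniform p r l m -> NoDup W -> (forall y, In y W -> lang r y) ->
  INR (length W) * weight l <= INR (rsize r).
Proof.
  revert l m W.
  induction r as [|b|r1 IH1 r2 IH2|r1 IH1 r2 IH2]; intros l m W Hu HW Hin.
  1,2: pose proof (NoDup_const_length_le_1 W _ HW Hin) as Hone; apply le_INR in Hone;
    pose proof (weight_le_1 l); pose proof (weight_nonneg l); simpl in *; nra.
  - destruct (uniform_union p r1 r2 l m Hu) as [Hu1 Hu2].
    destruct (NoDup_cover_length (lang r1) (lang r2) W HW Hin)
      as [W1 [W2 [HW1 [HW2 [Hin1 [Hin2 Hlen]]]]]].
    pose proof (IH1 l m W1 Hu1 HW1 Hin1). pose proof (IH2 l m W2 Hu2 HW2 Hin2).
    simpl rsize. rewrite Hlen, plus_INR, S_INR, plus_INR. lra.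
  - destruct (uniform_cat p r1 r2 l m p_odd Hu) as [l1 [l2 [m1 [m2 [-> [Hu1 Hu2]]]]]].
    destruct (NoDup_cat_split r1 r2 l1 W (fun u H => proj1 (Hu1 u H)) HW Hin)
      as [T1 [T2 [HT1 [HT2 [Hin1 [Hin2 Hlen]]]]]].
    assert (Hp : p <> 0%nat) by (destruct p_odd; lia).
    assert (Hc1 := NoDup_residue_class_length p l1 m1 T1 Hp HT1 (fun u H => Hu1 u (Hin1 u H))).
    assert (Hc2 := NoDup_residue_class_length p l2 m2 T2 Hp HT2 (fun w H => Hu2 w (Hin2 w H))).
    pose proof (IH1 l1 m1 T1 Hu1 HT1 Hin1). pose proof (IH2 l2 m2 T2 Hu2 HT2 Hin2).
    pose proof (weight_cat l1 l2 _ _ Hc1 Hc2). pose proof (weight_nonneg (l1 + l2)).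
    apply le_INR in Hlen. rewrite mult_INR in Hlen.
    simpl rsize. rewrite S_INR, plus_INR. nra.
Qed.

Corollary rsize_Ldiv_lower_bound (n : nat) (r : regex) :
  describes r (Ldiv n p) -> F n / INR p <= INR (rsize r).
Proof.
  intros Hr. assert (Hp : p <> 0%nat) by (destruct p_odd; lia).
  destruct (multiples_words n p Hp) as [W [HW [Hcount HinW]]].
  assert (Hu : uniform p r n 0) by (intros w Hw; now apply Hr).
  pose proof (uniform_rsize_lower_bound r n 0 W Hu HW (fun y H => proj2 (Hr y) (HinW y H))).
  apply Rle_trans with (2 := H). unfold weight.
  apply le_INR in Hcount. rewrite mult_INR, pow_INR in Hcount. simpl INR in Hcount.
  assert (0 < INR p) by (apply lt_0_INR; lia). pose proof (pow_lt 2 n ltac:(lra)).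
  pose proof (F_nonneg n).
  apply (Rmult_le_reg_r (INR p * 2 ^ n)); [nra|].
  replace (F n / INR p * (INR p * 2 ^ n)) with (F n * 2 ^ n) by (field; lra).
  replace (INR (length W) * (F n / 2 ^ n) * (INR p * 2 ^ n))
    with (F n * (INR p * INR (length W))) by (field; lra).
  now apply Rmult_le_compat_l.
Qed.

End WeightedCount.

Lemma ln_one_plus_le (x : R) : -1 < x -> ln (1 + x) <= x.
Proof.
  intros Hx. rewrite <- (ln_exp x) at 2.
  destruct (exp_ineq1_le x) as [H|H]; [left; apply ln_increasing; lra | now rewrite H].
Qed.

Section Growth.

Variable L : R.
Hypothesis L_gt_1 : 1 < L.

Definition growth (l : nat) : R := Rpower (Rmax (INR l / (2 * L)) 1) (L - 1).

Lemma growth_nonneg (l : nat) : 0 <= growth l.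
Proof. left. apply exp_pos. Qed.

Lemma growth_0 : growth 0 = 1.
Proof.
  unfold growth. rewrite Rmax_right by (simpl; unfold Rdiv; lra).
  unfold Rpower. now rewrite ln_1, Rmult_0_r, exp_0.
Qed.

Lemma Rpower_le_mult (x y c a : R) :
  0 <= a -> 0 < x -> 0 < y -> 0 < c -> x <= y * c -> Rpower x a <= Rpower y a * Rpower c a.
Proof.
  intros Ha Hx Hy Hc Hxy. rewrite Rpower_mult_distr by auto.
  apply Rle_Rpower_l; auto.
Qed.

Lemma Rpower_one_plus_inv_le_2 : Rpower (1 + / (2 * L)) (L - 1) <= 2.
Proof.
  assert (Hinv : 0 < / (2 * L)) by (apply Rinv_0_lt_compat; lra).
  assert (Hln := ln_one_plus_le (/ (2 * L)) ltac:(lra)).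
  assert (Hexp : (L - 1) * ln (1 + / (2 * L)) <= ln 2).
  { apply Rle_trans with ((L - 1) * / (2 * L)); [apply Rmult_le_compat_l; lra|].
    pose proof ln_lt_2. apply Rle_trans with (/ 2); [|lra].
    apply (Rmult_le_reg_r (2 * L)); [lra|]. field_simplify; lra. }
  unfold Rpower. rewrite <- (exp_ln 2) at 2 by lra.
  destruct Hexp as [H|H]; [left; now apply exp_increasing | now rewrite H].
Qed.

Lemma growth_succ (l : nat) : growth (S l) <= 2 * growth l.
Proof.
  set (M := Rmax (INR l / (2 * L)) 1).
  assert (HM : 1 <= M) by apply Rmax_r.
  assert (Hl : INR l / (2 * L) <= M) by apply Rmax_l.
  assert (Hinv : 0 < / (2 * L)) by (apply Rinv_0_lt_compat; lra).
  assert (Hstep : Rmax (INR (S l) / (2 * L)) 1 <= M * (1 + / (2 * L))).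
  { assert (/ (2 * L) <= M * / (2 * L)) by nra.
    apply Rmax_lub; [|lra]. rewrite S_INR. unfold Rdiv in *. lra. }
  unfold growth. fold M. pose proof Rpower_one_plus_inv_le_2.
  apply Rle_trans with (Rpower M (L - 1) * Rpower (1 + / (2 * L)) (L - 1)).
  - apply Rpower_le_mult; try lra. apply Rlt_le_trans with 1; [lra | apply Rmax_r].
  - rewrite Rmult_comm. apply Rmult_le_compat_r; [left; apply exp_pos | assumption].
Qed.

Lemma growth_add (l1 l2 : nat) :
  (l2 <= l1)%nat -> growth (l1 + l2) <= Rpower 2 (L - 1) * growth l1.
Proof.
  intros Hle. apply le_INR in Hle.
  set (M := Rmax (INR l1 / (2 * L)) 1).
  assert (HM : 1 <= M) by apply Rmax_r.
  assert (Hl : INR l1 / (2 * L) <= M) by apply Rmax_l.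
  assert (Hdouble : Rmax (INR (l1 + l2) / (2 * L)) 1 <= 2 * M).
  { apply Rmax_lub; [|lra]. rewrite plus_INR.
    apply Rle_trans with (2 * (INR l1 / (2 * L))); [|lra].
    unfold Rdiv. assert (0 < / (2 * L)) by (apply Rinv_0_lt_compat; lra). nra. }
  unfold growth. fold M.
  apply Rpower_le_mult; try lra. apply Rlt_le_trans with 1; [lra | apply Rmax_r].
Qed.

Lemma growth_ge (n : nat) : (1 <= n)%nat -> Rpower (INR n / (2 * L)) (L - 1) <= growth n.
Proof.
  intros Hn. apply le_INR in Hn. simpl in Hn.
  apply Rle_Rpower_l; [lra|]. split; [|apply Rmax_l].
  apply Rdiv_lt_0_compat; lra.
Qed.

End Growth.

Lemma log2_gt_1 (x : R) : 2 < x -> 1 < log2 x.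
Proof.
  intros Hx. pose proof ln_lt_2. unfold log2.
  assert (ln 2 < ln x) by (apply ln_increasing; lra).
  apply (Rmult_lt_reg_r (ln 2)); [lra|]. field_simplify; lra.
Qed.

Lemma Rpower_2_log2 (x : R) : 0 < x -> Rpower 2 (log2 x - 1) = x / 2.
Proof.
  intros Hx. pose proof ln_lt_2. unfold Rpower, log2.
  replace ((ln x / ln 2 - 1) * ln 2) with (ln x + - ln 2) by (field; lra).
  rewrite exp_plus, exp_Ropp, !exp_ln by lra. reflexivity.
Qed.

Lemma Rpower_bound_dominates (x P : R) : 0 < x -> 2 < P ->
  / x * Rpower P (log2 (x / log2 P) - 2) <= Rpower (x / (2 * log2 P)) (log2 P - 1) / P.
Proof.
  intros Hx HP. pose proof (log2_gt_1 P HP) as HL. pose proof ln_lt_2 as Hln2.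
  set (L := log2 P) in *.
  assert (HlnP : ln P = L * ln 2) by (unfold L, log2; field; lra).
  assert (HlnL : 0 < ln L) by (rewrite <- ln_1; apply ln_increasing; lra).
  assert (E1 : ln (x / L) = ln x - ln L).
  { unfold Rdiv. rewrite ln_mult, ln_Rinv; try lra. apply Rinv_0_lt_compat; lra. }
  assert (E2 : ln (x / (2 * L)) = ln x - ln 2 - ln L).
  { unfold Rdiv. rewrite ln_mult, ln_Rinv, ln_mult; try lra.
    apply Rinv_0_lt_compat; lra. }
  replace (/ x) with (exp (- ln x)) by (rewrite exp_Ropp, exp_ln; lra).
  unfold Rdiv at 2. replace (/ P) with (exp (- ln P)) by (rewrite exp_Ropp, exp_ln; lra).
  unfold Rpower. rewrite <- !exp_plus.
  left. apply exp_increasing. unfold log2. fold L. rewrite E1, E2, HlnP.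
  assert (Eq : (L - 1) * (ln x - ln 2 - ln L) + - (L * ln 2)
               - (- ln x + ((ln x - ln L) / ln 2 - 2) * (L * ln 2)) = ln 2 + ln L)
    by (field; lra).
  lra.
Qed.

Theorem theorem7p1 :
  exists c : R, 0 < c /\
    forall (p n : nat), Nat.Odd p -> (2 < p)%nat -> (1 <= n)%nat ->
    forall r : regex, describes r (Ldiv n p) ->
      c * / INR n * Rpower (INR p) (log2 (INR n / log2 (INR p)) - 2)
        <= INR (rsize r).
Proof.
  exists 1. split; [lra|].
  intros p n Hodd Hp Hn r Hr.
  assert (HP : 2 < INR p) by (apply lt_INR in Hp; simpl in Hp; lra).
  assert (Hx : 0 < INR n) by (apply lt_0_INR; lia).
  pose proof (log2_gt_1 (INR p) HP) as HL.
  set (L := log2 (INR p)) in *.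
  assert (Hsize : growth L n / INR p <= INR (rsize r)).
  { apply (rsize_Ldiv_lower_bound p Hodd (growth L) (growth_nonneg L)
             (Req_le _ _ (growth_0 L)) (growth_succ L HL)); [|exact Hr].
    intros l1 l2 Hl. unfold L. rewrite <- Rpower_2_log2 by lra. now apply growth_add. }
  rewrite Rmult_1_l. eapply Rle_trans; [now apply Rpower_bound_dominates|].
  apply Rle_trans with (2 := Hsize). unfold Rdiv.
  apply Rmult_le_compat_r; [left; apply Rinv_0_lt_compat; lra | now apply growth_ge].
Qed.
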